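(* Let $\mathbb{K}\in\{\mathbb{R},\mathbb{C}\}$, let $X$ be a linear space over $\mathbb{K}$, and let $\phi\colon X\times X\to\mathbb{K}$ be biadditive with $\phi(z_0,z_0)\neq 0$ for some $z_0\in X$. Suppose the equation $f(x+y)=f(x)f(y)-\phi(x,y)$ ($x,y\in X$) has at least one solution $f\colon X\to\mathbb{K}$. Then: (i) there exist $a\in\mathbb{K}\setminus\{0\}$ and a nonzero additive functional $F\colon X\to\mathbb{K}$ such that $\phi(x,y)=a^2F(x)F(y)$ for all $x,y\in X$; and (ii) the equation has exactly two solutions $f\colon X\to\mathbb{K}$, namely $f(x)=a\phi(x,z_0)+1$ and $f(x)=-a\phi(x,z_0)+1$, where $a\in\mathbb{K}$ is a constant with $a^2\phi(x,z_0)\phi(y,z_0)=\phi(x,y)$ for all $x,y\in X$ (so $a^2=1/\phi(z_0,z_0)$).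
   Context: A map $\phi\colon X\times X\to\mathbb{K}$ is biadditive if it is additive in each variable separately (no homogeneity assumed). A functional $F\colon X\to\mathbb{K}$ is additive if $F(x+y)=F(x)+F(y)$ for all $x,y$. *)

(* K ranges over {R, C} where R : realType and C := R[i]
   (complex numbers over R, from mathcomp-real-closed). *)
From HB Require Import structures.
From mathcomp Require Import all_boot all_order all_algebra.
From mathcomp Require Import reals.
From mathcomp.real_closed Require Import complex.
Set Implicit Arguments. Unset Strict Implicit. Unset Printing Implicit Defensive.
Import Order.TTheory GRing.Theory Num.Theory.
Local Open Scope ring_scope.

Definition biadditive (K : fieldType) (X : lmodType K) (phi : X -> X -> K) : Prop :=
  (forall x y z : X, phi (x + y) z = phi x z + phi y z) /\
  (forall x y z : X, phi x (y + z) = phi x y + phi x z).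

Definition additive_fun (K : fieldType) (X : lmodType K) (F : X -> K) : Prop :=
  forall x y : X, F (x + y) = F x + F y.

Definition solves (K : fieldType) (X : lmodType K) (phi : X -> X -> K) (f : X -> K) : Prop :=
  forall x y : X, f (x + y) = f x * f y - phi x y.

Definition thm_for (K : fieldType) : Prop :=
  forall (X : lmodType K) (phi : X -> X -> K) (z0 : X),
    biadditive phi ->
    phi z0 z0 != 0 ->
    (exists f : X -> K, solves phi f) ->
    (exists (a : K) (F : X -> K),
        a != 0 /\ additive_fun F /\ (exists x, F x != 0) /\
        (forall x y, phi x y = a ^+ 2 * F x * F y)) /\
    (exists a : K, forall x y, a ^+ 2 * phi x z0 * phi y z0 = phi x y) /\
    (forall a : K, (forall x y, a ^+ 2 * phi x z0 * phi y z0 = phi x y) ->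
       (fun x => a * phi x z0 + 1) <> (fun x => - a * phi x z0 + 1) /\
       (forall f : X -> K, solves phi f <->
          (f = (fun x => a * phi x z0 + 1) \/ f = (fun x => - a * phi x z0 + 1)))).

From mathcomp Require Import all_boot all_order all_algebra.
From mathcomp Require Import reals.
From mathcomp.real_closed Require Import complex.
From mathcomp Require Import ring.
Set Implicit Arguments. Unset Strict Implicit. Unset Printing Implicit Defensive.
Import Order.TTheory GRing.Theory Num.Theory.
Local Open Scope ring_scope.

(* Expanding f((x + y) + z) = f(x + (y + z)) with the equation and
   biadditivity gives phi(x,y) (f z - 1) = phi(y,z) (f x - 1); taking
   y = z = z0 shows that every solution is f = c phi(., z0) + 1.  Plugging
   this form back in, it is a solution iff phi(x,y) = c^2 phi(x,z0) phi(y,z0),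
   which forces c^2 phi(z0,z0) = 1 and leaves exactly the two choices
   c = a and c = -a. *)

Lemma eq_of_subr_scale (K : comPzRingType) (k a b c d : K) :
  a = b -> c - d = k * (a - b) -> c = d.
Proof. by move=> -> h; apply/eqP; rewrite -subr_eq0 h subrr mulr0. Qed.

Section Solutions.

Variables (K : fieldType) (X : lmodType K) (phi : X -> X -> K) (z0 : X).
Hypothesis phi_biadd : biadditive phi.

Let phiDl : forall x y z, phi (x + y) z = phi x z + phi y z.
Proof. by case: phi_biadd. Qed.
Let phiDr : forall x y z, phi x (y + z) = phi x y + phi x z.
Proof. by case: phi_biadd. Qed.

Definition affine_sol (c : K) (x : X) : K := c * phi x z0 + 1.

Definition factors_through_z0 (c : K) : Prop :=
  forall x y, c ^+ 2 * phi x z0 * phi y z0 = phi x y.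

Lemma solves_cocycle (f : X -> K) : solves phi f ->
  forall x y z, phi x y * (f z - 1) = phi y z * (f x - 1).
Proof.
move=> hf x y z.
have := congr1 f (addrA x y z); rewrite !hf phiDl phiDr => E.
by apply: (eq_of_subr_scale (k := 1) E); ring.
Qed.

Lemma solves_affine (f : X -> K) : phi z0 z0 != 0 -> solves phi f ->
  f = affine_sol ((f z0 - 1) / phi z0 z0).
Proof.
move=> hz0 hf; apply: boolp.funext => x.
have E := solves_cocycle hf x z0 z0.
by apply: (eq_of_subr_scale (k := - (phi z0 z0)^-1) E); rewrite /affine_sol; field.
Qed.

Lemma solves_affine_solE (c : K) :
  solves phi (affine_sol c) <-> factors_through_z0 c.
Proof.
rewrite /solves /affine_sol; split=> h x y; last by rewrite phiDl -(h x y); ring.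
by have := h x y; rewrite phiDl => E; apply: (eq_of_subr_scale (k := -1) E); ring.
Qed.

Lemma factors_through_z0_of_solves (f : X -> K) : phi z0 z0 != 0 ->
  solves phi f -> factors_through_z0 ((f z0 - 1) / phi z0 z0).
Proof. by move=> hz0 hf; apply/solves_affine_solE; rewrite -solves_affine. Qed.

Lemma factors_through_z0_scale (c : K) : phi z0 z0 != 0 ->
  factors_through_z0 c -> c ^+ 2 * phi z0 z0 = 1.
Proof. by move=> hz0 hc; apply: (mulIf hz0); rewrite mul1r hc. Qed.

Lemma factors_through_z0_neq0 (c : K) : phi z0 z0 != 0 ->
  factors_through_z0 c -> c != 0.
Proof.
move=> hz0 /(factors_through_z0_scale hz0); apply: contra_eqN => /eqP ->.
by rewrite expr0n mul0r eq_sym oner_neq0.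
Qed.

Lemma factors_through_z0_sign (a b : K) : phi z0 z0 != 0 ->
  factors_through_z0 a -> factors_through_z0 b -> b = a \/ b = - a.
Proof.
move=> hz0 ha hb.
have : b ^+ 2 == a ^+ 2.
  by apply/eqP/(mulIf hz0); rewrite !factors_through_z0_scale.
by rewrite eqf_sqr => /orP [] /eqP; [left | right].
Qed.

Lemma solvesE (a : K) (f : X -> K) : phi z0 z0 != 0 -> factors_through_z0 a ->
  solves phi f <-> f = affine_sol a \/ f = affine_sol (- a).
Proof.
move=> hz0 ha; split=> [hf | [] ->]; last 2 first.
- exact/solves_affine_solE.
- by apply/solves_affine_solE => x y; rewrite -(ha x y); ring.
rewrite (solves_affine hz0 hf).
have [-> | ->] := factors_through_z0_sign hz0 ha (factors_through_z0_of_solves hz0 hf).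
  by left.
by right.
Qed.

Lemma affine_sol_opp_neq (a : K) : (2 : K) != 0 -> phi z0 z0 != 0 ->
  a != 0 -> affine_sol a <> affine_sol (- a).
Proof.
move=> two hz0 an0 /(congr1 (fun g => g z0)) E.
have : 2 * (a * phi z0 z0) = 0.
  by apply: (eq_of_subr_scale (k := 1) E); rewrite /affine_sol; ring.
by move/eqP; apply/negP; rewrite !mulf_neq0.
Qed.

End Solutions.

Lemma thm_for_char_neq2 (K : fieldType) : (2 : K) != 0 -> thm_for K.
Proof.
move=> two X phi z0 hb hz0 [f hf].
have hc := factors_through_z0_of_solves hb hz0 hf.
set c := (f z0 - 1) / phi z0 z0 in hc.
split.
  exists c, (phi^~ z0); split; first exact: factors_through_z0_neq0 hc.
  split; first by move=> x y; case: hb.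
  by split; [exists z0 | move=> x y; rewrite hc].
split; first by exists c.
move=> a ha; split; last by move=> g; apply: solvesE.
exact/affine_sol_opp_neq/(factors_through_z0_neq0 hz0 ha).
Qed.

Theorem mainTheorem2 (R : realType) : thm_for R /\ thm_for R[i].
Proof. by split; apply: thm_for_char_neq2; rewrite pnatr_eq0. Qed.
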